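(* Let $\mathbb{F}$ be a field, $0\neq h\in\mathbb{F}[x]$, and let $A=A_h$ be the unital subalgebra of the Weyl algebra $A_1$ generated by $x$ and $\hat y=yh$. Let $\mathsf{D}_2:A\oplus A\to A$, $\mathsf{D}_2(\alpha,\beta)=[\beta,x]+[\hat y,\alpha]-F_\alpha(h)$. Then: (a) $\operatorname{im}\mathsf{D}_2\subseteq\gcd(h,h')A$; (b) if $\operatorname{char}(\mathbb{F})=0$, then $\operatorname{im}\mathsf{D}_2=\gcd(h,h')A$.
   Context: $A_1$ is generated by $x,y$ with $yx-xy=1$, so $\hat yx-x\hat y=h$ in $A$. $[a,b]=ab-ba$. For $\alpha\in A$, $F_\alpha:\mathbb{F}[x]\to A$ is the linear map with $F_\alpha(x^s)=\sum_{\ell=0}^{s-1}x^\ell\alpha x^{s-\ell-1}$ ($F_\alpha(1)=0$). $h'$ is the derivative of $h$; $\gcd$ monic. *)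

From HB Require Import structures.
From mathcomp Require Import all_boot all_order all_algebra.
Set Implicit Arguments. Unset Strict Implicit. Unset Printing Implicit Defensive.
Import GRing.Theory.
Local Open Scope ring_scope.

(* The first Weyl algebra A_1 over a field F, generated by x, y with
   yx - xy = 1, represented in its normal-form basis {x^i y^j}:
   an element sum_j f_j(x) y^j is stored as the polynomial in y
   with coefficients f_j in F[x], i.e. as an element of {poly {poly F}}.
   Addition is polynomial addition; multiplication is given by the
   normal-ordering rule  y^i g(x) = sum_k C(i,k) g^(k)(x) y^(i-k). *)
Section Weyl.
Variable F : fieldType.

Definition weyl := {poly {poly F}}.

Definition wmul (p q : weyl) : weyl :=
  \sum_(i < size p) \sum_(j < size q) \sum_(k < i.+1)
     ((p`_i * ((q`_j)^`(k) *+ 'C(i, k)))%:P * 'X^(i + j - k)).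

Definition wpoly (f : {poly F}) : weyl := f%:P.
Definition wone : weyl := wpoly 1.
Definition wx : weyl := wpoly 'X.
Definition wy : weyl := 'X.

Definition wcomm (a b : weyl) : weyl := wmul a b - wmul b a.

Definition yhat (h : {poly F}) : weyl := wmul wy (wpoly h).

Inductive inA (h : {poly F}) : weyl -> Prop :=
  | inA_one : inA h wone
  | inA_x : inA h wx
  | inA_yhat : inA h (yhat h)
  | inA_scale (c : F) a : inA h a -> inA h (wmul (wpoly c%:P) a)
  | inA_add a b : inA h a -> inA h b -> inA h (a + b)
  | inA_mul a b : inA h a -> inA h b -> inA h (wmul a b).

Definition Fmap (alpha : weyl) (f : {poly F}) : weyl :=
  \sum_(s < size f) \sum_(l < s)
     wmul (wpoly (f`_s)%:P)
       (wmul (wmul (wpoly 'X^l) alpha) (wpoly 'X^(s - l - 1))).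

Definition D2 (h : {poly F}) (alpha beta : weyl) : weyl :=
  wcomm beta wx + wcomm (yhat h) alpha - Fmap alpha h.

Definition gcd_hh' (h : {poly F}) : {poly F} :=
  let g := gcdp h h^`() in (lead_coef g)^-1 *: g.

End Weyl.

(* Since yhat = y h, one has [yhat, f] = h f' for f in F[x]; hence h A is a left
   ideal of A containing the commutators [b, f] and [yhat, b] and the differences
   F_b(f) - f' b for b in A.  Therefore D_2(alpha, beta) = -h' alpha modulo h A,
   which gives (a).  For (b), A is spanned over F[x] by the powers of yhat, and
   [yhat^(n+1), x] = (n+1) h yhat^n + h (terms of lower yhat-degree), so in
   characteristic 0 induction on the degree gives h A in [A, x].  Writing
   gcd(h, h') = u h + v h' and taking alpha = - v a then solves
   D_2(alpha, beta) = gcd(h, h') a. *)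

From HB Require Import structures.
From mathcomp Require Import all_boot all_order all_algebra.
From mathcomp Require Import ring zify.
Set Implicit Arguments. Unset Strict Implicit. Unset Printing Implicit Defensive.
Import GRing.Theory.
Local Open Scope ring_scope.

Section WeylProduct.
Variable F : fieldType.
Implicit Types (p q r : weyl F) (c : {poly F}).

(* Left multiplication by y on normal forms: y f(x) y^j = f(x) y^(j+1) + f'(x) y^j. *)
Definition ymul p : weyl F := 'X * p + map_poly (@deriv F) p.

Fact ymul_is_nmod_morphism : nmod_morphism ymul.
Proof. by split=> [|p q]; rewrite /ymul ?raddf0 ?mulr0 ?addr0 // raddfD mulrDr addrACA. Qed.
HB.instance Definition _ :=
  GRing.isNmodMorphism.Build (weyl F) (weyl F) ymul ymul_is_nmod_morphism.

Definition ymuln k : weyl F -> weyl F := iter k ymul.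

Fact ymuln_is_nmod_morphism k : nmod_morphism (ymuln k).
Proof. by split=> [|p q]; elim: k => //= k ->; rewrite ?raddf0 ?raddfD. Qed.
HB.instance Definition _ k :=
  GRing.isNmodMorphism.Build (weyl F) (weyl F) (ymuln k) (ymuln_is_nmod_morphism k).

Lemma ymulnS k p : ymuln k.+1 p = ymuln k (ymul p).
Proof. exact: iterSr. Qed.

Lemma ymul_polyCM c p : ymul (c%:P * p) = c%:P * ymul p + (c^`())%:P * p.
Proof.
rewrite /ymul mulrDr -addrA mulrCA; congr (_ + _).
apply/polyP => i; rewrite coefD !coefCM !coef_map_id0 ?deriv0 //.
by rewrite coefCM derivM addrC.
Qed.

Lemma ymulMXn p j : ymul (p * 'X^j) = ymul p * 'X^j.
Proof.
rewrite /ymul mulrDl mulrA; congr (_ + _).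
apply/polyP => i; rewrite coefMXn !coef_map_id0 ?deriv0 // coefMXn.
by case: ifP; rewrite ?deriv0.
Qed.

Lemma ymulnMXn k p j : ymuln k (p * 'X^j) = ymuln k p * 'X^j.
Proof. by elim: k => //= k ->; rewrite ymulMXn. Qed.

Lemma ymul_polyCMXn c j : ymul (c%:P * 'X^j) = c%:P * 'X^(j.+1) + (c^`())%:P * 'X^j.
Proof. by rewrite ymulMXn /ymul map_polyC mulrDl exprS mulrA [_ * c%:P]mulrC. Qed.

Lemma ymuln_polyC k c :
  ymuln k c%:P = \sum_(i < k.+1) (c^`(i) *+ 'C(k, i))%:P * 'X^(k - i).
Proof.
elim: k => [|k IH]; first by rewrite big_ord1 subn0 mulr1n expr0 mulr1.
rewrite /ymuln iterS -/(ymuln k) IH raddf_sum /=.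
under eq_bigr => i _ do rewrite ymul_polyCMXn derivMn -derivnS.
rewrite big_split /= [in RHS]big_ord_recl /=.
under [in RHS]eq_bigr => i _ do
  rewrite binS polyCMn mulrnDr -!polyCMn mulrDl subSS.
rewrite big_split /= addrA; congr (_ + _).
rewrite big_ord_recl [in RHS]big_ord_recr /= bin0 subn0 (bin_small (ltnSn k)).
rewrite mulr0n polyC0 mul0r addr0; congr (_ + _).
by apply: eq_bigr => i _; rewrite /bump /= add1n subnSK.
Qed.

Lemma ymuln1 k : ymuln k 1 = 'X^k.
Proof.
rewrite -polyC1 ymuln_polyC big_ord_recl bin0 subn0 big1 ?addr0 ?mul1r //.
by move=> i _; rewrite -polyC1 derivnC /= mul0rn mul0r.
Qed.

(* [p = sum_i p_i(x) y^i] evaluated at the operator [ymul]: by [wmulE] this is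
   the Weyl product, so associativity reduces to composing operators. *)
Definition wact p q : weyl F := \sum_(i < size p) (p`_i)%:P * ymuln i q.

Fact wact_is_nmod_morphism p : nmod_morphism (wact p).
Proof.
split=> [|q r]; rewrite /wact; first by rewrite big1 // => i _; rewrite raddf0 mulr0.
by rewrite -big_split; apply: eq_bigr => i _; rewrite raddfD mulrDr.
Qed.
HB.instance Definition _ p :=
  GRing.isNmodMorphism.Build (weyl F) (weyl F) (wact p) (wact_is_nmod_morphism p).

Lemma wact_widen p q k : (size p <= k)%N ->
  wact p q = \sum_(i < k) (p`_i)%:P * ymuln i q.
Proof.
move=> le_p_k; rewrite /wact (big_ord_widen k (fun i => (p`_i)%:P * ymuln i q)) //.
rewrite big_mkcond; apply: eq_bigr => i _; case: ltnP => // le_p_i.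
by rewrite nth_default // mul0r.
Qed.

Lemma wactDl p1 p2 q : wact (p1 + p2) q = wact p1 q + wact p2 q.
Proof.
set k := maxn (size p1) (size p2).
rewrite !(@wact_widen _ q k) ?leq_maxl ?leq_maxr ?(leq_trans (size_polyD _ _)) //.
by rewrite -big_split; apply: eq_bigr => i _; rewrite coefD polyCD mulrDl.
Qed.

Lemma wact0l q : wact 0 q = 0.
Proof. by rewrite /wact size_poly0 big_ord0. Qed.

Lemma wactNl p q : wact (- p) q = - wact p q.
Proof.
by rewrite /wact size_polyN -sumrN; apply: eq_bigr => i _; rewrite coefN polyCN mulNr.
Qed.

Lemma wact_suml I (s : seq I) (P : pred I) (E : I -> weyl F) q :
  wact (\sum_(i <- s | P i) E i) q = \sum_(i <- s | P i) wact (E i) q.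
Proof. exact: (big_morph (wact^~ q) (fun p1 p2 => wactDl p1 p2 q) (wact0l q)). Qed.

Lemma wact_polyCMl c p q : wact (c%:P * p) q = c%:P * wact p q.
Proof.
rewrite (@wact_widen _ q (size p)); last by rewrite mul_polyC size_scale_leq.
by rewrite mulr_sumr; apply: eq_bigr => i _; rewrite coefCM polyCM mulrA.
Qed.

Lemma wactXl p q : wact ('X * p) q = wact p (ymul q).
Proof.
rewrite (@wact_widen _ q (size p).+1); last first.
  by apply: leq_trans (size_polyMleq _ _) _; rewrite size_polyX.
rewrite big_ord_recl coefXM eqxx mul0r add0r.
by apply: eq_bigr => i _; rewrite coefXM ymulnS.
Qed.

Lemma ymul_wact p q :
  ymul (wact p q) = wact p (ymul q) + wact (map_poly (@deriv F) p) q.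
Proof.
rewrite (@wact_widen (map_poly _ p) q (size p)); last exact: size_poly.
rewrite raddf_sum -big_split; apply: eq_bigr => i _ /=.
by rewrite ymul_polyCM coef_map_id0 ?deriv0 // -ymulnS.
Qed.

Lemma wact_ymul p q : wact (ymul p) q = ymul (wact p q).
Proof. by rewrite ymul_wact /ymul wactDl wactXl. Qed.

Lemma wact_ymuln k p q : wact (ymuln k p) q = ymuln k (wact p q).
Proof. by elim: k => //= k IH; rewrite wact_ymul IH. Qed.

Lemma wactA p q r : wact (wact p q) r = wact p (wact q r).
Proof.
rewrite [wact p q]/wact wact_suml [wact p _]/wact; apply: eq_bigr => i _.
by rewrite wact_polyCMl wact_ymuln.
Qed.

Lemma wact1l q : wact 1 q = q.
Proof. by rewrite /wact size_poly1 big_ord1 coef1 mul1r. Qed.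

Lemma wact1r p : wact p 1 = p.
Proof.
rewrite /wact; under eq_bigr => i _ do rewrite ymuln1 mul_polyC.
by rewrite -poly_def coefK.
Qed.

Lemma wmulE p q : wmul p q = wact p q.
Proof.
rewrite /wmul /wact; apply: eq_bigr => i _.
rewrite -[in RHS](coefK q) poly_def raddf_sum mulr_sumr; apply: eq_bigr => j _.
rewrite /= -mul_polyC ymulnMXn ymuln_polyC !mulr_suml mulr_sumr.
apply: eq_bigr => k _; rewrite polyCM -!mulrA -exprD addnBAC //.
by rewrite -ltnS.
Qed.

End WeylProduct.

Section WeylRing.
Variable F : fieldType.
Implicit Types (p q r : weyl F) (f g : {poly F}).
Local Notation m := (@wmul F).
Local Notation P := (@wpoly F).

Lemma wmulA p q r : m (m p q) r = m p (m q r).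
Proof. by rewrite !wmulE wactA. Qed.
Lemma wmulDl p q r : m (p + q) r = m p r + m q r.
Proof. by rewrite !wmulE wactDl. Qed.
Lemma wmulDr p q r : m p (q + r) = m p q + m p r.
Proof. by rewrite !wmulE raddfD. Qed.
Lemma wmulNl p q : m (- p) q = - m p q.
Proof. by rewrite !wmulE wactNl. Qed.
Lemma wmulNr p q : m p (- q) = - m p q.
Proof. by rewrite !wmulE raddfN. Qed.
Lemma wmulBl p q r : m (p - q) r = m p r - m q r.
Proof. by rewrite wmulDl wmulNl. Qed.
Lemma wmulBr p q r : m p (q - r) = m p q - m p r.
Proof. by rewrite wmulDr wmulNr. Qed.
Lemma wmul0l q : m 0 q = 0.
Proof. by rewrite wmulE wact0l. Qed.
Lemma wmul0r p : m p 0 = 0.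
Proof. by rewrite wmulE raddf0. Qed.
Lemma wmulMnr p q k : m p (q *+ k) = m p q *+ k.
Proof. by rewrite !wmulE raddfMn. Qed.
Lemma wmul_suml I (s : seq I) (Q : pred I) (E : I -> weyl F) q :
  m (\sum_(i <- s | Q i) E i) q = \sum_(i <- s | Q i) m (E i) q.
Proof. by rewrite wmulE wact_suml; apply: eq_bigr => i _; rewrite wmulE. Qed.

Lemma wmul1l q : m (wone F) q = q.
Proof. by rewrite wmulE /wone /wpoly polyC1 wact1l. Qed.
Lemma wmul1r p : m p (wone F) = p.
Proof. by rewrite wmulE /wone /wpoly polyC1 wact1r. Qed.

Lemma wmul_wpolyl f q : m (P f) q = f%:P * q.
Proof. by rewrite wmulE /wpoly -[in LHS](mulr1 f%:P) wact_polyCMl wact1l. Qed.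
Lemma wmul_wpoly f g : m (P f) (P g) = P (f * g).
Proof. by rewrite wmul_wpolyl /wpoly polyCM. Qed.
Lemma wmul_wpolyC f g : m (P f) (P g) = m (P g) (P f).
Proof. by rewrite !wmul_wpoly mulrC. Qed.
Lemma wpolyD f g : P (f + g) = P f + P g.
Proof. exact: polyCD. Qed.
Lemma wpoly_sum I (s : seq I) (Q : pred I) (E : I -> {poly F}) :
  P (\sum_(i <- s | Q i) E i) = \sum_(i <- s | Q i) P (E i).
Proof. exact: (big_morph P wpolyD (polyC0 _)). Qed.

Lemma wmul_wpoly_dvd g f q : g %| f -> m (P f) q = m (P g) (m (P (f %/ g)) q).
Proof. by move=> dvd_gf; rewrite -wmulA wmul_wpoly mulrC divpK. Qed.

Lemma wmul_wy q : m (wy F) q = ymul q.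
Proof. by rewrite wmulE /wy -[in LHS](mulr1 'X) wactXl wact1l. Qed.

Lemma wcommDl p q r : wcomm (p + q) r = wcomm p r + wcomm q r.
Proof. rewrite /wcomm wmulDl wmulDr; ring. Qed.
Lemma wcommDr p q r : wcomm r (p + q) = wcomm r p + wcomm r q.
Proof. rewrite /wcomm wmulDl wmulDr; ring. Qed.
Lemma wcomm_wpoly f g : wcomm (P f) (P g) = 0.
Proof. by rewrite /wcomm wmul_wpolyC subrr. Qed.
Lemma wcomm1l q : wcomm (wone F) q = 0.
Proof. by rewrite /wcomm wmul1l wmul1r subrr. Qed.
Lemma wcommMl p q r : wcomm (m p q) r = m p (wcomm q r) + m (wcomm p r) q.
Proof. rewrite /wcomm wmulBr wmulBl !wmulA; ring. Qed.
Lemma wcommMr p q r : wcomm r (m p q) = m p (wcomm r q) + m (wcomm r p) q.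
Proof. rewrite /wcomm wmulBr wmulBl !wmulA; ring. Qed.

End WeylRing.

Section TheSubalgebra.
Variables (F : fieldType) (h : {poly F}).
Implicit Types (a b w : weyl F) (f g : {poly F}).
Local Notation m := (@wmul F).
Local Notation P := (@wpoly F).
Local Notation A := (inA h).
Local Notation yh := (yhat h).

Lemma inA0 : A 0.
Proof. by have := inA_scale 0 (inA_one h); rewrite wmul_wpolyl !polyC0 mul0r. Qed.

Lemma inA_wpoly f : A (P f).
Proof.
elim/poly_ind: f => [|f c IH]; first exact: inA0.
have -> : P (f * 'X + c%:P) = m (P f) (wx F) + m (P c%:P) (wone F).
  by rewrite wmul_wpoly wmul1r wpolyD.
exact: inA_add (inA_mul IH (inA_x h)) (inA_scale c (inA_one h)).
Qed.

Lemma inA_wpolyM f a : A a -> A (m (P f) a).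
Proof. exact: inA_mul (inA_wpoly f). Qed.

Lemma inAN a : A a -> A (- a).
Proof. by move=> Aa; have := inA_wpolyM (-1) Aa; rewrite wmul_wpolyl polyCN mulN1r. Qed.

Lemma inAB a b : A a -> A b -> A (a - b).
Proof. by move=> Aa Ab; apply: inA_add Aa (inAN Ab). Qed.

Lemma wcomm_yhat_wpoly f : wcomm yh (P f) = P (h * f^`()).
Proof.
rewrite /wcomm /yhat wmulA wmul_wpoly !wmul_wy wmul_wpolyl /ymul !map_polyC.
by rewrite /wpoly /= derivM !polyCM polyCD polyCM; ring.
Qed.

Lemma yhat_wpoly f : m yh (P f) = m (P f) yh + m (P h) (P f^`()).
Proof. by rewrite wmul_wpoly -wcomm_yhat_wpoly /wcomm addrC subrK. Qed.

Lemma yhat_wpolyM_h w : m yh (m (P h) w) = m (P h) (m yh w + m (P h^`()) w).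
Proof. by rewrite -wmulA yhat_wpoly wmulDl !wmulA wmulDr. Qed.

Lemma wpolyM_h f w : m (P f) (m (P h) w) = m (P h) (m (P f) w).
Proof. by rewrite -!wmulA wmul_wpolyC. Qed.

Definition in_hA w := exists2 a, A a & w = m (P h) a.

Lemma hA0 : in_hA 0.
Proof. by exists 0; rewrite ?wmul0r //; exact: inA0. Qed.

Lemma hAD w1 w2 : in_hA w1 -> in_hA w2 -> in_hA (w1 + w2).
Proof.
by move=> [a1 A1 ->] [a2 A2 ->]; exists (a1 + a2); rewrite ?wmulDr //; exact: inA_add.
Qed.

Lemma hAN w : in_hA w -> in_hA (- w).
Proof. by move=> [a Aa ->]; exists (- a); rewrite ?wmulNr //; exact: inAN. Qed.

Lemma hAB w1 w2 : in_hA w1 -> in_hA w2 -> in_hA (w1 - w2).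
Proof. by move=> H1 H2; apply: hAD H1 (hAN H2). Qed.

Lemma hA_sum I (s : seq I) (Q : pred I) (E : I -> weyl F) :
  (forall i, Q i -> in_hA (E i)) -> in_hA (\sum_(i <- s | Q i) E i).
Proof. exact: (big_ind in_hA hA0 hAD). Qed.

Lemma hA_mulr w b : in_hA w -> A b -> in_hA (m w b).
Proof. by move=> [a Aa ->] Ab; exists (m a b); rewrite ?wmulA //; exact: inA_mul. Qed.

Lemma hA_wpoly f : in_hA (m (P h) (P f)).
Proof. by exists (P f); first exact: inA_wpoly. Qed.

Lemma hA_mull b w : A b -> in_hA w -> in_hA (m b w).
Proof.
move=> Ab; elim: Ab w => {b} [|||c b _ IH|b1 b2 _ IH1 _ IH2|b1 b2 _ IH1 _ IH2] w hAw.
- by rewrite wmul1l.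
- case: hAw => a Aa ->; rewrite wpolyM_h.
  by exists (m (P 'X) a); first exact: inA_wpolyM.
- case: hAw => a Aa ->; rewrite yhat_wpolyM_h.
  exists (m yh a + m (P h^`()) a) => //.
  exact: inA_add (inA_mul (inA_yhat h) Aa) (inA_wpolyM _ Aa).
- rewrite wmulA; have [a Aa ->] := IH w hAw; rewrite wpolyM_h.
  by exists (m (P c%:P) a); first exact: inA_wpolyM.
- by rewrite wmulDl; apply: hAD; [apply: IH1 | apply: IH2].
- by rewrite wmulA; apply: IH1; apply: IH2.
Qed.

Lemma wcomm_wpoly_hA b f : A b -> in_hA (wcomm b (P f)).
Proof.
elim=> {b} [|||c b _ IH|b1 b2 _ IH1 _ IH2|b1 b2 Ab1 IH1 Ab2 IH2].
- by rewrite wcomm1l; exact: hA0.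
- by rewrite wcomm_wpoly; exact: hA0.
- by rewrite wcomm_yhat_wpoly -wmul_wpoly; exact: hA_wpoly.
- by rewrite wcommMl wcomm_wpoly wmul0l addr0; apply: hA_mull (inA_wpoly _) IH.
- by rewrite wcommDl; apply: hAD.
- by rewrite wcommMl; apply: hAD; [exact: hA_mull Ab1 IH2 | exact: hA_mulr IH1 Ab2].
Qed.

Lemma wcomm_yhat_hA b : A b -> in_hA (wcomm yh b).
Proof.
elim=> {b} [|||c b Ab IH|b1 b2 _ IH1 _ IH2|b1 b2 Ab1 IH1 Ab2 IH2].
- by rewrite /wcomm wmul1l wmul1r subrr; exact: hA0.
- by rewrite wcomm_yhat_wpoly -wmul_wpoly; exact: hA_wpoly.
- by rewrite /wcomm subrr; exact: hA0.
- rewrite wcommMr; apply: hAD; first exact: hA_mull (inA_wpoly _) IH.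
  by apply: (hA_mulr _ Ab); rewrite wcomm_yhat_wpoly -wmul_wpoly; exact: hA_wpoly.
- by rewrite wcommDr; apply: hAD.
- by rewrite wcommMr; apply: hAD; [exact: hA_mull Ab1 IH2 | exact: hA_mulr IH1 Ab2].
Qed.

Lemma wpolyXn_sandwich_hA l k b : A b ->
  in_hA (m (m (P 'X^l) b) (P 'X^k) - m (P 'X^(l + k)) b).
Proof.
move=> Ab; rewrite wmulA.
have -> : m b (P 'X^k) = m (P 'X^k) b + wcomm b (P 'X^k).
  by rewrite /wcomm addrC subrK.
rewrite wmulDr -wmulA wmul_wpoly -exprD addrC addKr.
by apply: hA_mull (wcomm_wpoly_hA _ Ab); exact: inA_wpoly.
Qed.

Lemma deriv_double_sum f :
  f^`() = \sum_(s < size f) \sum_(l < s) (f`_s)%:P * 'X^(s.-1).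
Proof.
rewrite -[f in LHS]coefK poly_def raddf_sum; apply: eq_bigr => s _ /=.
by rewrite sumr_const card_ord derivZ derivXn mul_polyC -scalerMnr.
Qed.

Lemma Fmap_deriv_hA f b : A b -> in_hA (Fmap b f - m (P f^`()) b).
Proof.
move=> Ab; rewrite deriv_double_sum wpoly_sum wmul_suml /Fmap -sumrB.
apply: hA_sum => s _; rewrite wpoly_sum wmul_suml -sumrB; apply: hA_sum => l _.
have -> : s.-1 = (l + (s - l - 1))%N by have := ltn_ord l; lia.
rewrite -wmul_wpoly (wmulA (P _) (P _)) -wmulBr; apply: hA_mull; first exact: inA_wpoly.
exact: wpolyXn_sandwich_hA.
Qed.


Lemma D2_hA alpha beta : A alpha -> A beta ->
  in_hA (D2 h alpha beta + m (P h^`()) alpha).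
Proof.
move=> Aalpha Abeta.
have -> : D2 h alpha beta + m (P h^`()) alpha =
    wcomm beta (P 'X) + wcomm yh alpha - (Fmap alpha h - m (P h^`()) alpha).
  by rewrite /D2 /wx; ring.
apply: hAB (Fmap_deriv_hA h Aalpha).
exact: hAD (wcomm_wpoly_hA _ Abeta) (wcomm_yhat_hA Aalpha).
Qed.

Lemma D2_in_gA g alpha beta : g %| h -> g %| h^`() -> A alpha -> A beta ->
  exists2 a, A a & D2 h alpha beta = m (P g) a.
Proof.
move=> g_h g_h' Aalpha Abeta; have [a Aa Ea] := D2_hA Aalpha Abeta.
exists (m (P (h %/ g)) a - m (P (h^`() %/ g)) alpha).
  by apply: inAB; apply: inA_wpolyM.
by rewrite wmulBr -!wmul_wpoly_dvd // -Ea addrK.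
Qed.

Definition in_adx w := exists2 b, A b & wcomm b (wx F) = w.

Lemma adx0 : in_adx 0.
Proof. by exists 0; [exact: inA0 | rewrite /wcomm wmul0l wmul0r subrr]. Qed.

Lemma adxD w1 w2 : in_adx w1 -> in_adx w2 -> in_adx (w1 + w2).
Proof.
by move=> [b1 A1 <-] [b2 A2 <-]; exists (b1 + b2); rewrite ?wcommDl //; exact: inA_add.
Qed.

Lemma adxN w : in_adx w -> in_adx (- w).
Proof.
move=> [b Ab <-]; exists (- b); first exact: inAN.
by rewrite /wcomm wmulNl wmulNr opprB opprK addrC.
Qed.

Lemma adxB w1 w2 : in_adx w1 -> in_adx w2 -> in_adx (w1 - w2).
Proof. by move=> H1 H2; apply: adxD H1 (adxN H2). Qed.

Lemma adx_wpolyM f w : in_adx w -> in_adx (m (P f) w).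
Proof.
move=> [b Ab <-]; exists (m (P f) b); first exact: inA_wpolyM.
by rewrite wcommMl wcomm_wpoly wmul0l addr0.
Qed.

Definition yhatn k := iter k (m yh) (wone F).

Lemma inA_yhatn k : A (yhatn k).
Proof. by elim: k => [|k IH]; [exact: inA_one | exact: inA_mul (inA_yhat h) IH]. Qed.

Inductive inA_lt (n : nat) : weyl F -> Prop :=
  | inA_lt0 : inA_lt n 0
  | inA_ltM f k : (k < n)%N -> inA_lt n (m (P f) (yhatn k))
  | inA_ltD a b : inA_lt n a -> inA_lt n b -> inA_lt n (a + b).

Lemma inA_lt_widen n n' w : (n <= n')%N -> inA_lt n w -> inA_lt n' w.
Proof.
move=> le_n_n'; elim=> [|f k lt_k_n|a b _ IHa _ IHb]; first exact: inA_lt0.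
  by apply: inA_ltM; apply: leq_trans le_n_n'.
exact: inA_ltD.
Qed.

Lemma inA_lt_wpolyM n f w : inA_lt n w -> inA_lt n (m (P f) w).
Proof.
elim=> [|g k lt_k_n|a b _ IHa _ IHb]; first by rewrite wmul0r; exact: inA_lt0.
  by rewrite -wmulA wmul_wpoly; exact: inA_ltM.
by rewrite wmulDr; exact: inA_ltD.
Qed.

Lemma inA_ltMn n k w : inA_lt n w -> inA_lt n (w *+ k).
Proof.
by move=> Hw; elim: k => [|k IH]; [exact: inA_lt0 | rewrite mulrS; exact: inA_ltD].
Qed.

Lemma inA_lt_yhatM n w : inA_lt n w -> inA_lt n.+1 (m yh w).
Proof.
elim=> [|g k lt_k_n|a b _ IHa _ IHb]; first by rewrite wmul0r; exact: inA_lt0.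
  rewrite -wmulA yhat_wpoly wmulDl wmul_wpoly wmulA; apply: inA_ltD.
    exact: (@inA_ltM _ g k.+1).
  by apply: inA_ltM; apply: ltn_trans lt_k_n _.
by rewrite wmulDr; exact: inA_ltD.
Qed.

Lemma inA_lt_mull b n w : A b -> inA_lt n w -> exists n', inA_lt n' (m b w).
Proof.
move=> Ab; elim: Ab n w => {b} [|||c b _ IH|b1 b2 _ IH1 _ IH2|b1 b2 _ IH1 _ IH2] n w Hw.
- by exists n; rewrite wmul1l.
- by exists n; apply: inA_lt_wpolyM.
- by exists n.+1; apply: inA_lt_yhatM.
- by have [n1 H] := IH n w Hw; exists n1; rewrite wmulA; apply: inA_lt_wpolyM.
- have [n1 H1] := IH1 n w Hw; have [n2 H2] := IH2 n w Hw.
  exists (maxn n1 n2); rewrite wmulDl; apply: inA_ltD.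
    by apply: inA_lt_widen H1; apply: leq_maxl.
  by apply: inA_lt_widen H2; apply: leq_maxr.
- have [n2 H2] := IH2 n w Hw; have [n1 H1] := IH1 n2 _ H2.
  by exists n1; rewrite wmulA.
Qed.

Lemma inA_lt_exists a : A a -> exists n, inA_lt n a.
Proof.
move=> Aa; have one_lt1 : inA_lt 1 (wone F).
  by have := @inA_ltM 1 1 0 (ltnSn 0); rewrite wmul1l.
by have [n Hn] := inA_lt_mull Aa one_lt1; exists n; rewrite wmul1r in Hn.
Qed.

Lemma wcomm_yhat_x : wcomm yh (wx F) = P h.
Proof. by rewrite /wx wcomm_yhat_wpoly derivX mulr1. Qed.

Lemma wcomm_yhatn_x n : exists2 r, inA_lt n r &
  wcomm (yhatn n.+1) (wx F) = m (P h) (yhatn n) *+ n.+1 + m (P h) r.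
Proof.
elim: n => [|n [r lt_r En]].
  exists 0; first exact: inA_lt0.
  by rewrite /yhatn /= wmul1r wcomm_yhat_x wmul0r addr0 wmul1r.
exists (m (P h^`()) (yhatn n) *+ n.+1 + m yh r + m (P h^`()) r).
  apply: inA_ltD; first apply: inA_ltD.
  - by apply: inA_ltMn; apply: inA_ltM.
  - exact: inA_lt_yhatM.
  - by apply: inA_lt_wpolyM; apply: inA_lt_widen lt_r.
have -> : yhatn n.+2 = m yh (yhatn n.+1) by [].
rewrite wcommMl wcomm_yhat_x En wmulDr wmulMnr !yhat_wpolyM_h.
have -> : m yh (yhatn n) = yhatn n.+1 by [].
by rewrite !wmulDr wmulMnr mulrnDl (mulrS _ n.+1); ring.
Qed.

Section CharacteristicZero.
Hypothesis char0 : [pchar F] =i pred0.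

Lemma adx_Mn_inv w k : in_adx (w *+ k.+1) -> in_adx w.
Proof.
move=> H; have := adx_wpolyM ((k.+1)%:R^-1)%:P H.
have nz_k1 : (k.+1)%:R != 0 :> F by rewrite (pcharf0P F).1.
rewrite wmulMnr wmul_wpolyl -mulrnAl -!polyCMn -[_^-1 *+ _]mulr_natr mulVf //.
by rewrite !polyC1 mul1r.
Qed.

Lemma hA_lt_adx n w : inA_lt n w -> in_adx (m (P h) w).
Proof.
elim: n w => [|n IHn] w; elim=> [|f k lt_k_n|a b _ IHa _ IHb].
- by rewrite wmul0r; exact: adx0.
- by [].
- by rewrite wmulDr; apply: adxD.
- by rewrite wmul0r; exact: adx0.
- move: lt_k_n; rewrite ltnS leq_eqVlt => /orP [/eqP -> | lt_k_n]; last first.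
    by apply: IHn; apply: inA_ltM.
  have [r lt_r Er] := wcomm_yhatn_x n.
  have H : in_adx (wcomm (m (P f) (yhatn n.+1)) (wx F)).
    by exists (m (P f) (yhatn n.+1)); first exact: inA_wpolyM (inA_yhatn _).
  rewrite wcommMl wcomm_wpoly wmul0l addr0 Er wmulDr wmulMnr !wpolyM_h in H.
  apply: (@adx_Mn_inv _ n).
  by have := adxB H (IHn _ (inA_lt_wpolyM f lt_r)); rewrite addrK.
- by rewrite wmulDr; apply: adxD.
Qed.

Lemma hA_adx w : in_hA w -> in_adx w.
Proof. by move=> [a Aa ->]; have [n Hn] := inA_lt_exists Aa; exact: hA_lt_adx Hn. Qed.

Lemma D2_onto_gA g u v a : u * h + v * h^`() = g -> A a ->
  exists alpha beta, [/\ A alpha, A beta & D2 h alpha beta = m (P g) a].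
Proof.
move=> Bezout Aa; set alpha := - m (P v) a.
(* [D2 alpha beta - g a] is [[beta, x] - w] for the following [w] in [h A]. *)
have Aalpha : A alpha by apply/inAN/inA_wpolyM.
set w := m (P (u * h)) a - (wcomm yh alpha - (Fmap alpha h - m (P h^`()) alpha)).
have hAw : in_hA w.
  apply: hAB (hAB (wcomm_yhat_hA Aalpha) (Fmap_deriv_hA h Aalpha)).
  by exists (m (P u) a); [exact: inA_wpolyM | rewrite -wmulA wmul_wpoly mulrC].
have [beta Abeta Ebeta] := hA_adx hAw.
exists alpha, beta; split => //.
rewrite /D2 Ebeta /w -Bezout wpolyD wmulDl /alpha wmulNr -wmulA wmul_wpoly.
by rewrite (mulrC h^`()); ring.
Qed.

End CharacteristicZero.

End TheSubalgebra.

Lemma Bezoutp_eqp (F : fieldType) (p q g : {poly F}) :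
  g %= gcdp p q -> exists u v, u * p + v * q = g.
Proof.
move=> g_gcd; have [[u v] /= Euv] := Bezoutp p q.
have /eqpP [[c1 c2] /= /andP [c1nz c2nz] Ec] : g %= u * p + v * q.
  by rewrite (eqp_trans g_gcd) // eqp_sym.
exists ((c1^-1 * c2) *: u), ((c1^-1 * c2) *: v).
by rewrite -!scalerAl -scalerDr -scalerA -Ec scalerA mulVf // scale1r.
Qed.

Lemma gcd_hh'_eqp (F : fieldType) (h : {poly F}) : gcd_hh' h %= gcdp h h^`().
Proof.
rewrite /gcd_hh'; have [->|nz_gcd] := eqVneq (gcdp h h^`()) 0.
  by rewrite scaler0 eqpxx.
by rewrite eqp_scale // invr_eq0 lead_coef_eq0.
Qed.

Theorem proposition3p3 (F : fieldType) (h : {poly F}) (hnz : h != 0) :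
  (* (a) im D_2 is contained in gcd(h,h') A *)
  (forall alpha beta : weyl F, inA h alpha -> inA h beta ->
     exists a : weyl F, inA h a /\ D2 h alpha beta = wmul (wpoly (gcd_hh' h)) a)
  /\
  (* (b) in characteristic 0, im D_2 = gcd(h,h') A *)
  ([pchar F] =i pred0 ->
   forall a : weyl F, inA h a ->
     exists alpha beta : weyl F, inA h alpha /\ inA h beta /\
       D2 h alpha beta = wmul (wpoly (gcd_hh' h)) a).
Proof.
have [g_h g_h'] : gcd_hh' h %| h /\ gcd_hh' h %| h^`().
  by rewrite !(eqp_dvdl _ (gcd_hh'_eqp h)) dvdp_gcdl dvdp_gcdr.
split=> [alpha beta Aalpha Abeta | char0 a Aa].
  by have [a Aa Ea] := D2_in_gA g_h g_h' Aalpha Abeta; exists a.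
have [u [v Bezout]] := Bezoutp_eqp (gcd_hh'_eqp h).
by have [alpha [beta [Aalpha Abeta E]]] := D2_onto_gA char0 Bezout Aa; exists alpha, beta.
Qed.
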